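(* Let $S=\{\rho_1=0<\rho_2<\cdots\}$ be a numerical semigroup. For a positive integer $d$ let $S_d=\{\rho\in S:\ \#A[\rho]=d\}$. The following are equivalent: (a) $\#A[2\rho_i]=2i-1$ for every positive integer $i$; (b) $\#S_d=1$ for every odd positive integer $d$; (c) $S$ is an Arf semigroup.
   Context: A numerical semigroup is a submonoid $S$ of $(\mathbb{N}_0,+)$ with finite complement, with elements listed increasingly. $S$ is Arf if $\rho_i+\rho_j-\rho_k\in S$ for all positive integers $i\ge j\ge k$. For $\rho\in S$, $A[\rho]=\{p\in S:\ \rho-p\in S\}$. *)

From mathcomp Require Import all_boot.
Set Implicit Arguments. Unset Strict Implicit. Unset Printing Implicit Defensive.

Definition numerical_semigroup (S : pred nat) : Prop :=
  [/\ S 0,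
      (forall a b, S a -> S b -> S (a + b)) &
      exists c, forall n, c <= n -> S n].

Definition cnt_below (S : pred nat) (x : nat) : nat := count S (iota 0 x).

(* is_rho S i x : x is the i-th element rho_i of S listed increasingly
   (1-indexed, so rho_1 = 0): x is in S and exactly i-1 elements of S
   are smaller than x. *)
Definition is_rho (S : pred nat) (i x : nat) : Prop :=
  S x /\ cnt_below S x = i.-1.

(* #A[r] where A[r] = {p in S : r - p in S}; such p satisfy 0 <= p <= r. *)
Definition cardA (S : pred nat) (r : nat) : nat :=
  count (fun p => S p && S (r - p)) (iota 0 r.+1).

Definition Arf (S : pred nat) : Prop :=
  forall i j k x y z, 0 < k -> k <= j -> j <= i ->
    is_rho S i x -> is_rho S j y -> is_rho S k z -> S (x + y - z).

From mathcomp Require Import all_boot zify.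

(* For x in S the elements of A[2x] pair off as p <-> 2x - p around x, so
   #A[2x] = 2 h(x) + 1, where h(x) counts the p < x of S with 2x - p in S, and
   #A[r] is odd only for such r = 2x. As h(x) is at most the number of elements
   of S below x, both (a) and (b) (the latter by strong induction on x) amount
   to: 2x - y lies in S whenever y <= x lie in S. This is the classical
   characterization of Arf semigroups. *)

Set Implicit Arguments.
Unset Strict Implicit.
Unset Printing Implicit Defensive.

Lemma count_predI_eq_all (T : Type) (a b : pred T) (s : seq T) :
  (count (predI b a) s == count a s) = all (fun x => a x ==> b x) s.
Proof. by rewrite -count_filter -[count a s]size_filter -all_count all_filter. Qed.

Lemma count_iota_sym (P : pred nat) (r : nat) :
  (forall p, p <= r -> P (r - p) = P p) ->
  forall k, 2 * k <= r.+1 ->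
  count P (iota 0 r.+1) = 2 * count P (iota 0 k) + count P (iota k (r.+1 - 2 * k)).
Proof.
move=> Psym; elim=> [|k IH] lek; first by rewrite muln0 subn0.
rewrite IH; last lia.
have [n def_n] : exists n, r.+1 - 2 * k = n.+2 by exists (r.+1 - 2 * k).-2; lia.
have -> : r.+1 - 2 * k.+1 = n by lia.
rewrite def_n; have -> : iota k n.+2 = k :: iota k.+1 n ++ [:: r - k].
  by rewrite -addn1 iotaD /=; congr (_ :: _ ++ [:: _]); lia.
have -> : iota 0 k.+1 = iota 0 k ++ [:: k] by rewrite -addn1 iotaD.
rewrite /= !count_cat /= Psym; lia.
Qed.

Section Counting.

Variable S : pred nat.

Definition half_pairs (x : nat) : nat :=
  count (fun p => S p && S (2 * x - p)) (iota 0 x).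

Lemma cardA_double x : cardA S (2 * x) = 2 * half_pairs x + S x.
Proof.
rewrite /cardA (@count_iota_sym _ _ _ x); last lia.
- have -> : (2 * x).+1 - 2 * x = 1 by lia.
  rewrite /= addn0; have -> : 2 * x - x = x by lia.
  by rewrite andbb.
- by move=> p lep /=; rewrite subKn // andbC.
Qed.

Lemma cardA_double_succ x :
  cardA S (2 * x).+1 = 2 * count (fun p => S p && S ((2 * x).+1 - p)) (iota 0 x.+1).
Proof.
rewrite /cardA (@count_iota_sym _ _ _ x.+1); last lia.
- have -> : (2 * x).+2 - 2 * x.+1 = 0 by lia.
  by rewrite /= addn0.
- by move=> p lep /=; rewrite subKn // andbC.
Qed.

Lemma odd_cardA r : odd (cardA S r) -> exists2 x, r = 2 * x & S x.
Proof.
rewrite -(odd_double_half r) -mul2n; case: (odd r) => /=.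
  by rewrite add1n cardA_double_succ oddM.
rewrite add0n cardA_double oddD oddM /=.
by case: (boolP (S r./2)) => // Sr _; exists r./2.
Qed.

Lemma half_pairs_le x : half_pairs x <= cnt_below S x.
Proof. by apply: sub_count => p /andP[]. Qed.

Lemma half_pairs_eqP x :
  half_pairs x = cnt_below S x <-> (forall p, p < x -> S p -> S (2 * x - p)).
Proof.
have -> : half_pairs x = count (predI (fun p => S (2 * x - p)) S) (iota 0 x).
  by apply: eq_count => p /=; rewrite andbC.
split=> [/eqP | closed].
  rewrite count_predI_eq_all => /allP all_x p ltpx Sp.
  by apply: (implyP (all_x p _)) => //; rewrite mem_iota.
apply/eqP; rewrite count_predI_eq_all; apply/allP => p.
by rewrite mem_iota => /andP[_ ltpx]; apply/implyP; apply: closed.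
Qed.

Lemma cnt_below_succ x : cnt_below S x.+1 = cnt_below S x + S x.
Proof. by rewrite /cnt_below -addn1 iotaD count_cat /= addn0. Qed.

Lemma cnt_below_mono y x : y <= x -> cnt_below S y <= cnt_below S x.
Proof. by move=> leyx; rewrite /cnt_below -(subnKC leyx) iotaD count_cat leq_addr. Qed.

Lemma cnt_below_lt y x : y < x -> S y -> cnt_below S y < cnt_below S x.
Proof.
move=> ltyx Sy; apply: leq_trans _ (cnt_below_mono ltyx).
by rewrite cnt_below_succ Sy addn1.
Qed.

Lemma cnt_below_inj x y : S x -> S y -> cnt_below S x = cnt_below S y -> x = y.
Proof.
move=> Sx Sy eq_cnt; case: (ltngtP x y) => // [ltxy|ltyx].
  by have := cnt_below_lt ltxy Sx; rewrite eq_cnt ltnn.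
by have := cnt_below_lt ltyx Sy; rewrite eq_cnt ltnn.
Qed.

Lemma cnt_below_attained n k :
  k < cnt_below S n -> exists y, [/\ y < n, S y & cnt_below S y = k].
Proof.
elim: n => [//|n IH]; rewrite cnt_below_succ => ltk.
have [ltkn|] := ltnP k (cnt_below S n).
  by have [y [ltyn Sy cnt_y]] := IH ltkn; exists y; split => //; lia.
by case Sn: (S n) ltk => /= ltk geq; [exists n; split => //; lia | lia].
Qed.

Lemma is_rho_le i j x y : 0 < j -> j <= i -> is_rho S i x -> is_rho S j y -> y <= x.
Proof.
move=> j_gt0 leji [Sx cnt_x] [Sy cnt_y]; rewrite leqNgt; apply/negP => ltxy.
by have := cnt_below_lt ltxy Sx; rewrite cnt_x cnt_y; lia.
Qed.

Definition twice_minus_closed : Prop :=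
  forall x y, S x -> S y -> y <= x -> S (2 * x - y).

Lemma twice_minus_closedP :
  twice_minus_closed <-> forall x, S x -> half_pairs x = cnt_below S x.
Proof.
split=> [closed x Sx | full x y Sx Sy].
  by apply/half_pairs_eqP => p ltpx Sp; apply: closed => //; apply: ltnW.
rewrite leq_eqVlt => /orP[/eqP -> | ltyx]; first by have -> : 2 * x - x = x by lia.
exact: (proj1 (half_pairs_eqP x) (full x Sx)).
Qed.

Lemma cardA_double_rankP :
  (forall i x, 0 < i -> is_rho S i x -> cardA S (2 * x) = (2 * i).-1) <->
  (forall x, S x -> half_pairs x = cnt_below S x).
Proof.
split=> [cardA_rank x Sx | full i x i_gt0 [Sx cnt_x]].
  by have := cardA_rank _ x (ltn0Sn _) (conj Sx erefl); rewrite cardA_double Sx; lia.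
by rewrite cardA_double Sx full // cnt_x; lia.
Qed.

Section TwiceMinusClosed.

Hypothesis closed : twice_minus_closed.

Lemma twice_minus_closed_progression z e :
  S z -> S (z + e) -> forall j, S (z + j * e).
Proof.
move=> Sz Sze j; suff [] : S (z + j * e) /\ S (z + j.+1 * e) by [].
elim: j => [|j [Sj Sj1]]; first by rewrite mul0n addn0 mul1n.
split=> //.
have -> : z + j.+2 * e = 2 * (z + j.+1 * e) - (z + j * e) by rewrite !mulSn; lia.
by apply: closed => //; rewrite mulSn; lia.
Qed.

(* Induction on y - z: with a := z + q e <= x < b := a + e on the progression
   through z and y, the pair (b, x, a) has the smaller gap x - a = (x - z) %% e
   and b + x - a = x + y - z. *)
Lemma twice_minus_closed_Arf x y z :
  S x -> S y -> S z -> z <= y -> y <= x -> S (x + y - z).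
Proof.
have [n] := ubnP (y - z); elim: n x y z => // n IH x y z lt_gap Sx Sy Sz lezy leyx.
have [gap0 | gap_gt0] := posnP (y - z); first by have -> : x + y - z = x by lia.
have Sprog := twice_minus_closed_progression Sz (_ : S (z + (y - z))).
rewrite subnKC // in Sprog; have Sa := Sprog Sy ((x - z) %/ (y - z)).
have Sb := Sprog Sy ((x - z) %/ (y - z)).+1; rewrite mulSn in Sb.
have := divn_eq (x - z) (y - z); have := ltn_pmod (x - z) gap_gt0.
set m := _ %/ _ * _; set r := _ %% _ => ltr def_x.
have -> : x + y - z = z + (y - z + m) + x - (z + m) by lia.
by apply: IH => //; lia.
Qed.

End TwiceMinusClosed.

Lemma ArfP : Arf S <-> twice_minus_closed.
Proof.
split=> [arf x y Sx Sy leyx | closed i j k x y z k_gt0 lekj leji rho_x rho_y rho_z].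
  have -> : 2 * x - y = x + x - y by lia.
  apply: (arf (cnt_below S x).+1 (cnt_below S x).+1 (cnt_below S y).+1) => //.
  by rewrite ltnS cnt_below_mono.
have leyx := is_rho_le (leq_trans k_gt0 lekj) leji rho_x rho_y.
have lezy := is_rho_le k_gt0 lekj rho_y rho_z.
by case: rho_x rho_y rho_z => [Sx _] [Sy _] [Sz _]; apply: twice_minus_closed_Arf.
Qed.

End Counting.

Section NumericalSemigroup.

Variable S : pred nat.
Hypothesis HS : numerical_semigroup S.

Lemma cnt_below_surj k : exists y, S y /\ cnt_below S y = k.
Proof.
case: HS => _ _ [c cofinite].
have count_tail m c' : c <= c' -> count S (iota c' m) = m.
  by elim: m c' => // m IH c' lec /=; rewrite cofinite // IH // leqW.
have : k < cnt_below S (c + k.+1).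
  rewrite /cnt_below iotaD count_cat add0n (count_tail k.+1 c) //.
  by rewrite addnS ltnS leq_addl.
by case/cnt_below_attained => y [_ Sy cnt_y]; exists y.
Qed.

Lemma numerical_semigroup_double x : S x -> S (2 * x).
Proof. by case: HS => _ Sadd _ Sx; rewrite mul2n -addnn Sadd. Qed.

(* By strong induction: if half_pairs x < cnt_below S x, the element y < x of S
   of rank half_pairs x already satisfies the claim, so 2 y and 2 x would share
   the odd value 2 half_pairs x + 1 of cardA. *)
Lemma unique_odd_cardAP :
  (forall d, 0 < d -> odd d -> exists! r, S r /\ cardA S r = d) <->
  (forall x, S x -> half_pairs S x = cnt_below S x).
Proof.
split=> [unique_r | full d d_gt0 odd_d].
  elim/ltn_ind => x IH Sx; move: (half_pairs_le S x).
  rewrite leq_eqVlt => /orP[/eqP // | lt_x]; exfalso.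
  have [y [ltyx Sy cnt_y]] := cnt_below_attained lt_x.
  have odd_2h : odd (2 * half_pairs S x).+1 by rewrite -addn1 oddD oddM.
  have [r [_ uniq_r]] := unique_r _ (ltn0Sn _) odd_2h.
  have r2x : r = 2 * x.
    by apply: uniq_r; rewrite numerical_semigroup_double // cardA_double Sx addn1.
  have r2y : r = 2 * y.
    apply: uniq_r; rewrite numerical_semigroup_double //.
    by rewrite cardA_double Sy IH // cnt_y addn1.
  lia.
have [y [Sy cnt_y]] := cnt_below_surj d./2.
have cardA_y : cardA S (2 * y) = d.
  by rewrite cardA_double Sy full // cnt_y -[in RHS](odd_double_half d) odd_d; lia.
exists (2 * y); split=> [|r [Sr cardA_r]]; first by rewrite numerical_semigroup_double.
have [x def_r Sx] : exists2 x, r = 2 * x & S x by apply: odd_cardA; rewrite cardA_r.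
rewrite -cardA_y def_r !cardA_double Sx Sy !full // in cardA_r.
by rewrite def_r (cnt_below_inj Sx Sy) //; lia.
Qed.

End NumericalSemigroup.

Theorem mainTheorem12 (S : pred nat) (HS : numerical_semigroup S) :
  [/\ ((forall i x, 0 < i -> is_rho S i x -> cardA S (2 * x) = (2 * i).-1)
        <-> (forall d, 0 < d -> odd d -> exists! r, S r /\ cardA S r = d)),
      ((forall d, 0 < d -> odd d -> exists! r, S r /\ cardA S r = d)
        <-> Arf S) &
      ((forall i x, 0 < i -> is_rho S i x -> cardA S (2 * x) = (2 * i).-1)
        <-> Arf S)].
Proof.
have a_iff := cardA_double_rankP S.
have b_iff := unique_odd_cardAP HS.
have c_iff : Arf S <-> forall x, S x -> half_pairs S x = cnt_below S x.
  exact: iff_trans (ArfP S) (twice_minus_closedP S).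
by split; [apply: iff_trans a_iff (iff_sym b_iff)
          | apply: iff_trans b_iff (iff_sym c_iff)
          | apply: iff_trans a_iff (iff_sym c_iff)].
Qed.
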